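(* Let $\sigma$ be a boundedly erasing $k$-block substitution with $w_\epsilon\ne1^k$. Then: (i) $\sigma$ does not satisfy the optimality condition; (ii) there exists $n\in\mathbb N$ such that $f_\sigma^n(x)=0$ for every $x\in\mathbb I$ whose $f_\sigma$-orbit is disjoint from $\mathcal Q_2$.
   Context: Notation: $\mathbb I=[0,1]$. $\mathcal Q_2$ is the set of dyadic rationals in the open interval $(0,1)$. $\{0,1\}^*$ and $\{0,1\}^\omega$ denote finite and infinite binary words, and $\epsilon$ is the empty word. For a word $w$, set $0.w=\sum_iw_i2^{-i}$. For $x\in(0,1]$, $\widetilde x$ is the unique infinite binary expansion of $x$ not ending in $0^\infty$. Fix $k\ge2$. An erasing $k$-block substitution is a map $\sigma:\{0,1\}^k\to\{0,1\}^*$ with exactly one block $w_\epsilon$ such that $\sigma(w_\epsilon)=\epsilon$. $\sigma$ is alternating if there are $\sigma_1,\dots,\sigma_k:\{0,1\}\to\{0,1\}^*$ with $\sigma(b_1\cdots b_k)=\sigma_1(b_1)\cdots\sigma_k(b_k)$. It is then extended to all finite or infinite words by $\sigma(u)=\prod_j\sigma_{((j-1)\bmod k)+1}(u_j)$. $\sigma$ is completely erasing if it is erasing and alternating, and every $w\in\{0,1\}^*$ satisfies $\sigma^n(w)=\epsilon$ for some $n\in\mathbb N$; the least such $n$ is $\epsilon(w)$. $\sigma$ is boundedly erasing if it is completely erasing and $\sup_{w\in\{0,1\}^*}\epsilon(w)<\infty$. The map $f_\sigma:\mathbb I\to\mathbb I$ is defined by $f_\sigma(x)=0.\sigma(\widetilde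 x)$ if $x\in(0,1]$ and $\widetilde x\neq w_\epsilon^\infty$, and $f_\sigma(x)=0$ otherwise. Optimality condition: every $w\in\{0,1\}^\omega$ can be written as $w=\prod_{i\ge1}\sigma(b_i)$ with blocks $b_i\in\{0,1\}^k$ satisfying $\sigma(b_i)\ne\epsilon$. *)

From mathcomp Require Import all_boot.
From Stdlib Require Import Reals ClassicalEpsilon.
From Coquelicot Require Import Lim_seq Rbar.

Set Implicit Arguments.
Unset Strict Implicit.
Unset Printing Implicit Defensive.

Open Scope R_scope.

(* Infinite binary words are [nat -> bool]; letter i (0-based) has weight 2^-(i+1). *)
Definition iword := nat -> bool.

Fixpoint fin_val (w : seq bool) : R :=
  match w with
  | [::] => 0
  | b :: v => (if b then 1 else 0) / 2 + fin_val v / 2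
  end.

Definition iprefix (u : iword) (n : nat) : seq bool := mkseq u n.

Definition inf_val (u : iword) : R := real (Lim_seq (fun n => fin_val (iprefix u n))).

Definition block_subst (k : nat) := k.-tuple bool -> seq bool.

Definition erasing_with (k : nat) (sigma : block_subst k) (weps : k.-tuple bool) :=
  sigma weps = [::] /\ forall b, sigma b = [::] -> b = weps.

Definition erasing (k : nat) (sigma : block_subst k) :=
  exists weps, erasing_with sigma weps.

(* sigma(b_1...b_k) = sigma_1(b_1) ... sigma_k(b_k); components indexed 0..k-1
   (values of s at indices >= k are irrelevant) *)
Definition alternating_via (k : nat) (sigma : block_subst k)
  (s : nat -> bool -> seq bool) :=
  forall b : k.-tuple bool, sigma b = flatten [seq s i (nth false b i) | i <- iota 0 k].

Definition ext_fin (k : nat) (s : nat -> bool -> seq bool) (u : seq bool) : seq bool :=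
  flatten [seq s (j %% k)%nat (nth false u j) | j <- iota 0 (size u)].

Definition completely_erasing_via (k : nat) (sigma : block_subst k) s :=
  erasing sigma /\ alternating_via sigma s /\
  forall w : seq bool, exists n, iter n (ext_fin k s) w = [::].

Definition boundedly_erasing (k : nat) (sigma : block_subst k) :=
  exists s, completely_erasing_via sigma s /\
    exists N : nat, forall w : seq bool,
      exists n, (n <= N)%nat /\ iter n (ext_fin k s) w = [::].

Definition iblock (k : nat) (u : iword) (j : nat) : k.-tuple bool :=
  [tuple u (j * k + i)%nat | i < k].

Definition sigma_prefix (k : nat) (sigma : block_subst k) (u : iword) (j : nat) :=
  flatten [seq sigma (iblock k u i) | i <- iota 0 j].

Definition sigma_val (k : nat) (sigma : block_subst k) (u : iword) : R :=
  real (Lim_seq (fun j => fin_val (sigma_prefix sigma u j))).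

(* u is the infinite binary expansion of x not ending in 0^oo *)
Definition is_tilde (x : R) (u : iword) :=
  (forall n, exists m, (n <= m)%nat /\ u m = true) /\ x = inf_val u.

Definition tilde (x : R) : iword :=
  epsilon (inhabits (fun _ => true)) (is_tilde x).

Definition periodic (k : nat) (w : k.-tuple bool) : iword :=
  fun i => nth false w (i %% k).

Definition f_sigma (k : nat) (sigma : block_subst k) (weps : k.-tuple bool) (x : R) : R :=
  if excluded_middle_informative
       ((0 < x <= 1) /\ tilde x <> periodic weps)
  then sigma_val sigma (tilde x) else 0.

Definition dyadic01 (x : R) :=
  0 < x < 1 /\ exists a n : nat, x = INR a / 2 ^ n.

Definition optimal (k : nat) (sigma : block_subst k) :=
  forall w : iword, exists b : nat -> k.-tuple bool,
    (forall i, sigma (b i) <> [::]) /\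
    forall j, let p := flatten [seq sigma (b i) | i <- iota 0 j] in
      forall i, (i < size p)%nat -> nth false p i = w i.

(* Both parts rest on one notion.  For g on finite words, an infinite word u
   is "covered" by v under g when every finite prefix of u is a prefix of g
   applied to some finite prefix of v.  Coverings compose along a chain when g
   is prefix-monotone, so a chain u_N, ..., u_0 in which each u_(m+1) is
   covered by u_m under sigma yields a covering of u_N by u_0 under sigma^N.
   If sigma erases every finite word in N steps, sigma^N maps every word to
   the empty word, and no word can be covered at all.
   (i) If sigma were optimal, every word w would be sigma of a concatenation
       of blocks D(w), so w is covered by D(w); iterating D gives a chain.
   (ii) If y = f_sigma(x) is neither 0 nor dyadic, then the expansion tilde y
       is the limit of the prefixes sigma(B_1)...sigma(B_j) of sigma(tilde x)
       (otherwise y would be a finite binary fraction), so tilde y is covered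
       by tilde x; along an orbit avoiding 0 and the dyadics this gives a chain.
   The argument only uses k >= 1, alternation and the uniform erasure bound. *)

From mathcomp Require Import all_boot.
From Stdlib Require Import Reals Lra Classical ClassicalEpsilon.
From Coquelicot Require Import Rbar Lim_seq.

Set Implicit Arguments.
Unset Strict Implicit.
Close Scope R_scope.

Lemma iprefixD (u : iword) n d :
  iprefix u (n + d) = iprefix u n ++ [seq u i | i <- iota n d].
Proof. by rewrite /iprefix /mkseq iotaD map_cat. Qed.

Lemma iprefix_homo (u : iword) : {homo iprefix u : m n / m <= n >-> prefix m n}.
Proof. by move=> m n /subnKC <-; rewrite iprefixD prefix_prefix. Qed.

Lemma prefix_chain (P : nat -> seq bool) :
  (forall j, prefix (P j) (P j.+1)) -> {homo P : i j / i <= j >-> prefix i j}.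
Proof. by apply: homo_leq; [exact: prefix_refl | exact: prefix_trans]. Qed.

Lemma prefix_nth (p r : seq bool) i :
  prefix p r -> i < size p -> nth false r i = nth false p i.
Proof. by move=> /prefixP[q ->] hi; rewrite nth_cat hi. Qed.

Lemma prefix_size_eq (p r : seq bool) : prefix p r -> size p = size r -> p = r.
Proof.
move=> /prefixP[q ->]; rewrite size_cat -{1}[size p]addn0 => /addnI/esym/size0nil ->.
by rewrite cats0.
Qed.

Lemma prefix_of_agree (w : iword) (p : seq bool) n :
  n <= size p -> (forall i, i < size p -> nth false p i = w i) ->
  prefix (iprefix w n) p.
Proof.
move=> hn agree; rewrite prefixE size_mkseq; apply/eqP.
apply: (@eq_from_nth _ false); first by rewrite size_mkseq size_takel.
move=> i; rewrite size_takel // => hi.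
by rewrite nth_take // nth_mkseq // agree // (leq_trans hi).
Qed.

Section Extension.
Variables (k : nat) (s : nat -> bool -> seq bool).

Lemma ext_fin_homo : {homo ext_fin k s : p r / prefix p r}.
Proof.
move=> p _ /prefixP[q ->]; rewrite /ext_fin size_cat iotaD map_cat flatten_cat add0n.
apply/prefixP; eexists; congr (flatten _ ++ _); apply/eq_in_map => j.
by rewrite mem_iota add0n => /andP[_ hj]; rewrite nth_cat hj.
Qed.

Lemma iter_ext_fin_nil n : iter n (ext_fin k s) [::] = [::].
Proof. by elim: n => //= n ->. Qed.

Lemma bounded_erasure_kills N :
  (forall w, exists n, n <= N /\ iter n (ext_fin k s) w = [::]) ->
  forall w, iter N (ext_fin k s) w = [::].
Proof.
move=> bnd w; have [n [hn ew]] := bnd w.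
by rewrite -(subnK hn) iterD ew iter_ext_fin_nil.
Qed.

End Extension.

Section SigmaPrefix.
Variables (k : nat) (sigma : block_subst k).

Lemma sigma_prefixS u j :
  sigma_prefix sigma u j.+1 = sigma_prefix sigma u j ++ sigma (iblock k u j).
Proof. by rewrite /sigma_prefix -addn1 iotaD map_cat flatten_cat /= cats0. Qed.

Lemma sigma_prefix_chain u j : prefix (sigma_prefix sigma u j) (sigma_prefix sigma u j.+1).
Proof. by rewrite sigma_prefixS prefix_prefix. Qed.

Lemma sigma_prefix_ext s : 0 < k -> alternating_via sigma s ->
  forall u j, sigma_prefix sigma u j = ext_fin k s (iprefix u (j * k)).
Proof.
move=> k_gt0 alt u; elim=> [|j IH]; first by [].
rewrite sigma_prefixS IH alt mulSn addnC iprefixD /ext_fin size_cat size_mkseq.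
rewrite size_map size_iota iotaD map_cat flatten_cat add0n.
congr (_ ++ _).
  congr flatten; apply/eq_in_map => i; rewrite mem_iota add0n => /andP[_ hi].
  by rewrite nth_cat size_mkseq hi.
have -> : iota (j * k) k = map (addn (j * k)) (iota 0 k) by rewrite -iotaDl addn0.
rewrite -map_comp; congr flatten; apply/eq_in_map => i.
rewrite mem_iota add0n => /andP[_ hi] /=.
rewrite nth_cat size_mkseq ltnNge leq_addr /= addKn.
rewrite !(nth_map 0) ?size_map ?size_iota // nth_iota // add0n modnMDl modn_small //.
by rewrite (nth_map (Ordinal hi)) ?size_enum_ord // nth_enum_ord.
Qed.

End SigmaPrefix.

Definition covers (g : seq bool -> seq bool) (u v : iword) :=
  forall n, exists L, prefix (iprefix u n) (g (iprefix v L)).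

Lemma covers_comp g h (u v w : iword) : {homo g : p r / prefix p r} ->
  covers g u v -> covers h v w -> covers (g \o h) u w.
Proof.
move=> g_homo cuv cvw n; have [L hL] := cuv n; have [L' hL'] := cvw L.
by exists L'; apply: prefix_trans hL (g_homo _ _ hL').
Qed.

Lemma covers_iter g (W : nat -> iword) N : {homo g : p r / prefix p r} ->
  (forall m, m < N -> covers g (W m.+1) (W m)) -> covers (iter N g) (W N) (W 0).
Proof.
move=> g_homo; elim: N => [_ n|N IH step]; first by exists n; exact: prefix_refl.
exact: covers_comp g_homo (step N (ltnSn N)) (IH (fun m hm => step m (ltnW hm))).
Qed.

Lemma covers_killed g (u v : iword) : (forall p, g p = [::]) -> ~ covers g u v.
Proof. by move=> kill /(_ 1) [L]; rewrite kill. Qed.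

Section NonOptimality.
Variables (k : nat) (sigma : block_subst k) (s : nat -> bool -> seq bool).
Hypotheses (k_gt0 : 0 < k) (alt : alternating_via sigma s).

Definition cat_blocks (b : nat -> k.-tuple bool) : iword :=
  fun i => nth false (b (i %/ k)) (i %% k).

Lemma iblock_cat_blocks b j : iblock k (cat_blocks b) j = b j.
Proof.
apply: eq_from_tnth => i; rewrite /iblock tnth_mktuple /cat_blocks.
by rewrite divnMDl // modnMDl divn_small // modn_small // addn0 (tnth_nth false).
Qed.

(* A decomposition w = sigma(b_0) sigma(b_1) ... into nonempty images makes
   w covered by b_0 b_1 ... under sigma: the first n letters of w lie in the
   images of the first n blocks. *)
Lemma decomposition_covers (w : iword) (b : nat -> k.-tuple bool) :
  (forall i, sigma (b i) <> [::]) ->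
  (forall j, let p := flatten [seq sigma (b i) | i <- iota 0 j] in
     forall i, i < size p -> nth false p i = w i) ->
  covers (ext_fin k s) w (cat_blocks b).
Proof.
move=> nonempty agree n; exists (n * k).
rewrite -(sigma_prefix_ext k_gt0 alt).
have E : sigma_prefix sigma (cat_blocks b) n = flatten [seq sigma (b i) | i <- iota 0 n].
  by congr flatten; apply: eq_map => i; rewrite iblock_cat_blocks.
rewrite E; apply: prefix_of_agree; last exact: agree.
elim: n {E} => // n IH; rewrite -addn1 iotaD map_cat flatten_cat size_cat add0n /= cats0.
by rewrite leq_add // lt0n size_eq0; apply/eqP/nonempty.
Qed.

(* Under optimality every word is covered by some D(w); the chain
   D^N(w0), ..., D(w0), w0 would give a covering under sigma^N. *)
Lemma not_optimal N : (forall w, iter N (ext_fin k s) w = [::]) -> ~ optimal sigma.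
Proof.
move=> kill opt.
have [D HD] : exists D : iword -> iword, forall w, covers (ext_fin k s) w (D w).
  have [B HB] := ClassicalEpsilon.choice _ opt.
  by exists (fun w => cat_blocks (B w)) => w; case: (HB w); apply: decomposition_covers.
pose W m := iter (N - m) D (fun _ => false).
suff : covers (iter N (ext_fin k s)) (W N) (W 0) by apply: covers_killed.
apply: covers_iter; first exact: ext_fin_homo.
by move=> m hm; rewrite /W -(subnSK hm); apply: HD.
Qed.

End NonOptimality.

Open Scope R_scope.

Lemma fin_val_cat p q : fin_val (p ++ q) = fin_val p + fin_val q / 2 ^ size p.
Proof.
elim: p => [|b p IH] /=; first by field.
rewrite IH; have pos := pow_lt 2 (size p) ltac:(lra); field; lra.
Qed.

Lemma fin_val_bounds p : 0 <= fin_val p <= 1 - / 2 ^ size p.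
Proof.
elim: p => [|b p IH] /=; first lra.
have pos := pow_lt 2 (size p) ltac:(lra).
have -> : / (2 * 2 ^ size p) = / 2 ^ size p / 2 by field; lra.
by case: b; lra.
Qed.

Lemma fin_val_prefix p r :
  prefix p r -> fin_val p <= fin_val r <= fin_val p + / 2 ^ size p.
Proof.
move=> /prefixP[q ->]; rewrite fin_val_cat /Rdiv.
have := Rinv_0_lt_compat _ (pow_lt 2 (size p) ltac:(lra)).
have := Rinv_0_lt_compat _ (pow_lt 2 (size q) ltac:(lra)).
have := fin_val_bounds q.
move: (fin_val p) (fin_val q) (/ 2 ^ size p) (/ 2 ^ size q) => a b c d; nra.
Qed.

Lemma fin_val_dyadic p : exists a : nat, fin_val p = INR a / 2 ^ size p.
Proof.
elim: p => [|b p [a IH]] /=; first by exists 0%nat; rewrite /=; field.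
exists ((if b then Nat.pow 2 (size p) else 0) + a)%nat.
have pos := pow_lt 2 (size p) ltac:(lra).
rewrite plus_INR IH; case: b; last by rewrite /=; field; lra.
rewrite pow_INR (_ : INR 2 = 2); [field; lra | simpl; lra].
Qed.

Lemma fin_val_dyadic01 p : fin_val p <> 0 -> dyadic01 (fin_val p).
Proof.
move=> nz; have [lo hi] := fin_val_bounds p.
have := Rinv_0_lt_compat _ (pow_lt 2 (size p) ltac:(lra)) => pos.
have [a ea] := fin_val_dyadic p.
by split; [lra | exists a, (size p)].
Qed.

Lemma incr_lim_bounds (a : nat -> R) M :
  (forall n, a n <= a n.+1) -> (forall n, a n <= M) ->
  (forall n, a n <= real (Lim_seq a)) /\ real (Lim_seq a) <= M.
Proof.
move=> incr bnd; have lim := Lim_seq_correct' a (ex_finite_lim_seq_incr a M incr bnd).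
split; first exact: is_lim_seq_incr_compare lim incr.
exact: is_lim_seq_le a (fun _ => M) _ _ bnd lim (is_lim_seq_const M).
Qed.

(* The value of the (finite or infinite) word approximated by a prefix chain P;
   both inf_val u and sigma_val sigma u are values of prefix chains, namely
   of iprefix u and of sigma_prefix sigma u. *)
Definition chain_value (P : nat -> seq bool) : R := real (Lim_seq (fun j => fin_val (P j))).

Section PrefixChain.
Variable P : nat -> seq bool.
Hypothesis chain : forall j, prefix (P j) (P j.+1).

Lemma chain_value_ge j : fin_val (P j) <= chain_value P.
Proof.
have incr j' : fin_val (P j') <= fin_val (P j'.+1) by exact: (fin_val_prefix (chain j')).1.
have bnd j' : fin_val (P j') <= 1.
  have [_ hi] := fin_val_bounds (P j').
  have := Rinv_0_lt_compat _ (pow_lt 2 (size (P j')) ltac:(lra)); lra.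
exact: (incr_lim_bounds incr bnd).1.
Qed.

Lemma chain_value_le M : (forall j, fin_val (P j) <= M) -> chain_value P <= M.
Proof.
move=> bnd; apply: (incr_lim_bounds _ bnd).2 => j.
exact: (fin_val_prefix (chain j)).1.
Qed.

End PrefixChain.

Lemma iprefix_chain (u : iword) j : prefix (iprefix u j) (iprefix u j.+1).
Proof. exact: iprefix_homo. Qed.

Lemma inf_val_bounds (u : iword) n :
  fin_val (iprefix u n) <= inf_val u <= fin_val (iprefix u n) + / 2 ^ n.
Proof.
split; first exact: (chain_value_ge (iprefix_chain u)).
apply: (chain_value_le (iprefix_chain u)) => m.
have pos := Rinv_0_lt_compat _ (pow_lt 2 n ltac:(lra)).
case: (leqP n m) => [nm|mn].
  by have := fin_val_prefix (iprefix_homo u nm); rewrite size_mkseq; lra.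
by have := fin_val_prefix (iprefix_homo u (ltnW mn)); lra.
Qed.

Lemma fin_val_iprefixS (u : iword) n :
  fin_val (iprefix u n.+1) = fin_val (iprefix u n) + (if u n then / 2 ^ n.+1 else 0).
Proof.
rewrite /iprefix mkseqS -cats1 fin_val_cat size_mkseq /=.
have pos := pow_lt 2 n ltac:(lra); case: (u n); field; lra.
Qed.

Definition infinitely_many_ones (u : iword) := forall n, exists m, (n <= m)%nat /\ u m = true.

Lemma inf_val_lt (u v : iword) n :
  iprefix u n = iprefix v n -> u n = false -> v n = true ->
  (exists m, (n < m)%nat /\ v m = true) -> inf_val u < inf_val v.
Proof.
move=> same un vn [m [nm vm]].
have [_ hu] := inf_val_bounds u n.+1.
have [hv _] := inf_val_bounds v m.+1.
have hvm := (fin_val_prefix (iprefix_homo v nm)).1.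
rewrite fin_val_iprefixS un same in hu.
rewrite fin_val_iprefixS vm in hv.
rewrite fin_val_iprefixS vn in hvm.
have := Rinv_0_lt_compat _ (pow_lt 2 m.+1 ltac:(lra)); lra.
Qed.

Lemma inf_val_inj (u v : iword) :
  infinitely_many_ones u -> infinitely_many_ones v -> inf_val u = inf_val v -> u =1 v.
Proof.
move=> iu iv e.
have same n : iprefix u n = iprefix v n.
  elim: n => // n IH; rewrite /iprefix !mkseqS -/(iprefix u n) -/(iprefix v n) IH.
  case hu: (u n); case hv: (v n) => //.
    by have := inf_val_lt (esym IH) hv hu (iu n.+1); lra.
  by have := inf_val_lt IH hu hv (iv n.+1); lra.
by move=> i; have := congr1 (nth false ^~ i) (same i.+1); rewrite /iprefix !nth_mkseq.
Qed.

Lemma tilde_unique (y : R) (W : iword) :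
  infinitely_many_ones W -> y = inf_val W -> tilde y =1 W.
Proof.
move=> iW eW; have [it ey] : is_tilde y (tilde y) by apply: epsilon_spec; exists W.
by apply: inf_val_inj; rewrite // -ey.
Qed.

Lemma eventually_zero (u : iword) :
  ~ infinitely_many_ones u -> exists n0, forall m, (n0 <= m)%nat -> u m = false.
Proof.
move=> fin; apply: NNPP => nz; apply: fin => n; apply: NNPP => none; apply: nz.
by exists n => m nm; case um: (u m) => //; exfalso; apply: none; exists m.
Qed.

Lemma inf_val_eventually_zero (u : iword) n0 :
  (forall m, (n0 <= m)%nat -> u m = false) -> inf_val u = fin_val (iprefix u n0).
Proof.
move=> zero; apply: Rle_antisym; last exact: (inf_val_bounds u n0).1.
apply: (chain_value_le (iprefix_chain u)) => m; case: (leqP n0 m) => [nm|mn].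
  rewrite -(subnKC nm); elim: (m - n0)%nat => [|d IH]; first by rewrite addn0; lra.
  by rewrite addnS fin_val_iprefixS zero ?leq_addr // Rplus_0_r.
exact: (fin_val_prefix (iprefix_homo u (ltnW mn))).1.
Qed.

Lemma bounded_monotone_stable (f : nat -> nat) M :
  {homo f : i j / (i <= j)%nat} -> (forall j, (f j <= M)%nat) ->
  exists j0, forall j, (j0 <= j)%nat -> f j = f j0.
Proof.
move=> mono bnd; apply: NNPP => unstable.
have grow j0 : exists j, (f j0 < f j)%nat.
  apply: NNPP => nogrow; apply: unstable; exists j0 => j hj.
  apply/eqP; rewrite eqn_leq (mono _ _ hj) andbT leqNgt; apply/negP => lt.
  by apply: nogrow; exists j.
have big n : exists j, (n <= f j)%nat.
  elim: n => [|n [j hj]]; first by exists 0%nat.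
  by have [j' hj'] := grow j; exists j'; apply: leq_ltn_trans hj hj'.
by have [j hj] := big M.+1; have := leq_trans hj (bnd j); rewrite ltnn.
Qed.

Section ChainExpansion.
Variable P : nat -> seq bool.
Hypothesis chain : forall j, prefix (P j) (P j.+1).

Let chain_homo := prefix_chain chain.

Lemma chain_value_stable j0 :
  (forall j, (j0 <= j)%nat -> P j = P j0) -> chain_value P = fin_val (P j0).
Proof.
move=> stable; apply: Rle_antisym; last exact: chain_value_ge.
apply: chain_value_le => // j; case: (leqP j0 j) => [hj|hj].
  by rewrite stable //; lra.
exact: (fin_val_prefix (chain_homo (ltnW hj))).1.
Qed.

Lemma chain_bounded_finite M : (forall j, (size (P j) <= M)%nat) ->
  exists p, chain_value P = fin_val p.
Proof.
move=> bnd; have size_homo : {homo (fun j => size (P j)) : i j / (i <= j)%nat}.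
  by move=> i j hij; apply: size_prefix; apply: chain_homo.
have [j0 hj0] := bounded_monotone_stable size_homo bnd.
exists (P j0); apply: chain_value_stable => j hj.
by apply/esym/prefix_size_eq; [apply: chain_homo | rewrite hj0].
Qed.

Hypothesis unbounded : forall n, exists j, (n < size (P j))%nat.

(* The limit word: its letter i is letter i of any long enough P j. *)
Lemma chain_limit_word : exists W : iword, forall j, iprefix W (size (P j)) = P j.
Proof.
have [J hJ] := ClassicalEpsilon.choice _ unbounded.
exists (fun i => nth false (P (J i)) i) => j.
apply: prefix_size_eq; last by rewrite size_mkseq.
apply: prefix_of_agree => // i hi.
case: (leqP j (J i)) => [hj|hj].
  by rewrite (prefix_nth (chain_homo hj)).
by rewrite (prefix_nth (chain_homo (ltnW hj)) (hJ i)).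
Qed.

Lemma limit_word_value W :
  (forall j, iprefix W (size (P j)) = P j) -> inf_val W = chain_value P.
Proof.
move=> limW; apply: Rle_antisym.
  apply: (chain_value_le (iprefix_chain W)) => n; have [j hj] := unbounded n.
  apply: Rle_trans (chain_value_ge chain j); rewrite -limW.
  exact: (fin_val_prefix (iprefix_homo W (ltnW hj))).1.
by apply: chain_value_le => // j; rewrite -limW; apply: (inf_val_bounds W _).1.
Qed.

End ChainExpansion.

Lemma chain_value_expansion (P : nat -> seq bool) :
  (forall j, prefix (P j) (P j.+1)) ->
  chain_value P <> 0 -> ~ dyadic01 (chain_value P) ->
  forall n, exists j, prefix (iprefix (tilde (chain_value P)) n) (P j).
Proof.
move=> chain; set y := chain_value P => nz nd.
have not_finite p : y <> fin_val p.
  by move=> e; apply: nd; rewrite e; apply: fin_val_dyadic01; rewrite -e.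
have unbounded n : exists j, (n < size (P j))%nat.
  apply: NNPP => none; have bnd j : (size (P j) <= n)%nat.
    by rewrite leqNgt; apply/negP => lt; apply: none; exists j.
  by have [p] := chain_bounded_finite chain bnd; apply: not_finite.
have [W limW] := chain_limit_word chain unbounded.
have eW : y = inf_val W by rewrite (limit_word_value chain unbounded limW).
have [iW|fW] := classic (infinitely_many_ones W); last first.
  have [n0 zero] := eventually_zero fW.
  by have := not_finite (iprefix W n0); rewrite eW (inf_val_eventually_zero zero).
move=> n; have [j hj] := unbounded n; exists j.
have -> : iprefix (tilde y) n = iprefix W n by apply: eq_mkseq; apply: tilde_unique.
by rewrite -(limW j); apply: iprefix_homo (ltnW hj).
Qed.

Section Orbits.
Variables (k : nat) (sigma : block_subst k) (weps : k.-tuple bool).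
Variable s : nat -> bool -> seq bool.
Hypotheses (k_gt0 : (0 < k)%nat) (alt : alternating_via sigma s).

Local Notation f := (f_sigma sigma weps).

Lemma iter_f_sigma0 n : iter n f 0 = 0.
Proof.
elim: n => //= n ->; rewrite /f_sigma.
by case: excluded_middle_informative => // hx; exfalso; case: hx => -[x_pos _] _; lra.
Qed.

Lemma f_sigma_value x : f x <> 0 -> f x = sigma_val sigma (tilde x).
Proof. by rewrite /f_sigma; case: excluded_middle_informative. Qed.

Lemma f_sigma_covers x : f x <> 0 -> ~ dyadic01 (f x) ->
  covers (ext_fin k s) (tilde (f x)) (tilde x).
Proof.
move=> nz; have := nz; rewrite (f_sigma_value nz) => sv_nz sv_nd n.
have [j hj] := chain_value_expansion (sigma_prefix_chain sigma (tilde x)) sv_nz sv_nd n.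
by exists (j * k)%nat; rewrite -(sigma_prefix_ext k_gt0 alt).
Qed.

(* If f^N(x) <> 0 the whole orbit up to N avoids 0 and gives a covering of
   tilde (f^N x) by tilde x under sigma^N, which is impossible. *)
Lemma orbit_vanishes N x : (forall w, iter N (ext_fin k s) w = [::]) ->
  (forall m, ~ dyadic01 (iter m f x)) -> iter N f x = 0.
Proof.
move=> kill nd; apply: NNPP => nz.
have alive m : (m <= N)%nat -> iter m f x <> 0.
  by move=> hm e; apply: nz; rewrite -(subnK hm) iterD e iter_f_sigma0.
suff : covers (iter N (ext_fin k s)) (tilde (iter N f x)) (tilde (iter 0 f x)).
  exact: covers_killed.
apply: (covers_iter (W := fun m => tilde (iter m f x))); first exact: ext_fin_homo.
by move=> m hm; apply: f_sigma_covers; [exact: (alive m.+1 hm) | exact: (nd m.+1)].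
Qed.

End Orbits.

Theorem lemma4p1 (k : nat) (sigma : block_subst k) (weps : k.-tuple bool) :
  (2 <= k)%nat ->
  erasing_with sigma weps ->
  boundedly_erasing sigma ->
  weps <> [tuple true | _ < k] ->
  ~ optimal sigma /\
  exists n : nat, forall x : R, 0 <= x <= 1 ->
    (forall m : nat, ~ dyadic01 (iter m (f_sigma sigma weps) x)) ->
    iter n (f_sigma sigma weps) x = 0.
Proof.
move=> k_ge2 _ [s [[_ [alt _]] [N bounded]]] _.
have k_gt0 : (0 < k)%nat by apply: ltnW.
have kill := bounded_erasure_kills bounded.
split; first exact: (not_optimal k_gt0 alt kill).
by exists N => x _; apply: (orbit_vanishes k_gt0 alt kill).
Qed.
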